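(* Let $R$ be an integral domain and $I$ an ideal of $R[X]$ such that $I\cap R$ is a maximal ideal of $R$. Then $I$ is power stable.
   Context: An ideal $I$ of the polynomial ring $R[X]$ over an integral domain $R$ is called power stable if $I^t\cap R = (I\cap R)^t$ for all integers $t\geq 1$. *)

From HB Require Import structures.
From mathcomp Require Import all_boot all_order all_algebra.
Set Implicit Arguments. Unset Strict Implicit. Unset Printing Implicit Defensive.
Import GRing.Theory.
Local Open Scope ring_scope.

Definition is_ideal (A : comNzRingType) (I : A -> Prop) : Prop :=
  [/\ I 0,
      (forall x y, I x -> I y -> I (x + y)) &
      (forall a x, I x -> I (a * x))].

Definition is_maximal_ideal (A : comNzRingType) (I : A -> Prop) : Prop :=
  [/\ is_ideal I, ~ I 1 &
      forall J : A -> Prop, is_ideal J -> (forall x, I x -> J x) ->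
        (forall x, J x <-> I x) \/ (forall x, J x)].

Definition ideal_mul (A : comNzRingType) (I J : A -> Prop) : A -> Prop :=
  fun x => exists s : seq (A * A),
    {in s, forall p, I p.1 /\ J p.2} /\ x = \sum_(p <- s) p.1 * p.2.

Fixpoint ideal_pow (A : comNzRingType) (I : A -> Prop) (t : nat) : A -> Prop :=
  match t with
  | 0 => fun _ => True
  | t'.+1 => ideal_mul I (ideal_pow I t')
  end.

Definition contraction (R : idomainType) (I : {poly R} -> Prop) : R -> Prop :=
  fun r => I r%:P.

Definition power_stable (R : idomainType) (I : {poly R} -> Prop) : Prop :=
  forall t : nat, (1 <= t)%N ->
    forall r : R, contraction (ideal_pow I t) r <-> ideal_pow (contraction I) t r.

From mathcomp Require Import all_boot all_order all_algebra.
From Stdlib Require Import Classical.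
Set Implicit Arguments. Unset Strict Implicit. Unset Printing Implicit Defensive.
Import GRing.Theory.
Local Open Scope ring_scope.
Import Pdiv.Ring Pdiv.RingMonic.

(* Let m = I ∩ R be maximal.  The inclusion m^t ⊆ I^t ∩ R is immediate, so
   the content is the reverse inclusion.  The idea is to find a monic
   polynomial p of positive degree such that every g ∈ I leaves a remainder
   modulo p whose coefficients all lie in m:
   - if every element of I has its coefficients in m, take p = X;
   - otherwise take f ∈ I whose highest coefficient outside m sits in the
     least possible degree d, invert that coefficient modulo m (b f_d ≡ 1),
     and put p = X^d + Σ_{i<d} b f_i X^i.  Then p ≡ b f has coefficients
     congruent modulo m, so p ∈ I; remainders modulo p lie in I and have
     degree < d, hence by minimality of d all their coefficients are in m.
   Since division by a monic polynomial preserves "all coefficients in J"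
   and remainders are multiplicative, every g ∈ I^t has a remainder with
   coefficients in m^t.  A constant r ∈ I^t is its own remainder (deg p > 0),
   so r ∈ m^t. *)

Lemma least_witness (P : nat -> Prop) n :
  P n -> exists d, P d /\ forall k, (k < d)%N -> ~ P k.
Proof.
have [N] := ubnP n; elim: N n => // N IH n HnN Pn.
case: (classic (exists k, (k < n)%N /\ P k)) => [[k [Hk Pk]]|H].
- by apply: (IH k) => //; apply: leq_trans Hk _; rewrite -ltnS.
- by exists n; split => // k Hk Pk; apply: H; exists k.
Qed.

Lemma last_witness (P : nat -> Prop) n N :
  P n -> (forall k, (N <= k)%N -> ~ P k) ->
  exists d, P d /\ forall k, (d < k)%N -> ~ P k.
Proof.
elim: N => [|N IH] Pn HN; first by case: (HN n (leq0n n) Pn).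
case: (classic (P N)) => [PN|nPN]; first by exists N.
by apply: IH => // k; rewrite leq_eqVlt => /orP [/eqP <-|/HN].
Qed.

Section IdealFacts.
Variable A : comNzRingType.
Implicit Types J K : A -> Prop.

Lemma ideal_opp J x : is_ideal J -> J x -> J (- x).
Proof. by case=> _ _ JM Jx; rewrite -mulN1r; apply: JM. Qed.

Lemma ideal_sub J x y : is_ideal J -> J x -> J y -> J (x - y).
Proof. by move=> HJ Jx Jy; case: (HJ) => _ JD _; apply: JD (ideal_opp HJ Jy). Qed.

Lemma ideal_sum J (I : Type) (r : seq I) (P : pred I) (F : I -> A) :
  is_ideal J -> (forall i, P i -> J (F i)) -> J (\sum_(i <- r | P i) F i).
Proof. by case=> J0 JD _ JF; apply: big_rec => // i x /JF; apply: JD. Qed.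

Lemma ideal_mul_ideal J K : is_ideal J -> is_ideal (ideal_mul J K).
Proof.
move=> [_ _ JM]; split.
- by exists [::]; rewrite big_nil.
- move=> x y [s1 [H1 ->]] [s2 [H2 ->]]; exists (s1 ++ s2).
  rewrite big_cat; split => // q; rewrite mem_cat => /orP [/H1|/H2] //.
- move=> a x [s [H ->]]; exists [seq (a * q.1, q.2) | q <- s]; split.
  + by move=> q /mapP [q' /H [J1 K2] ->]; split => //; apply: JM.
  + by rewrite big_map mulr_sumr; apply: eq_bigr => q _; rewrite mulrA.
Qed.

Lemma ideal_mul_prod J K x y : J x -> K y -> ideal_mul J K (x * y).
Proof.
move=> Jx Ky; exists [:: (x, y)]; rewrite big_seq1; split => // q.
by rewrite inE => /eqP ->.
Qed.

Lemma ideal_pow_ideal J t : is_ideal J -> is_ideal (ideal_pow J t).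
Proof. by case: t => [|t] HJ //=; apply: ideal_mul_ideal. Qed.

Lemma maximal_ideal_inverse J a :
  is_maximal_ideal J -> ~ J a -> exists b, J (1 - b * a).
Proof.
case=> [[J0 JD JM] _ Jmax] Ja.
pose K y := exists b, J (y - b * a).
have HK : is_ideal K.
  split; first by exists 0; rewrite mul0r subr0.
  - move=> y z [b Jb] [c Jc]; exists (b + c).
    by rewrite mulrDl opprD addrACA; apply: JD.
  - by move=> c y [b Jb]; exists (c * b); rewrite -mulrA -mulrBr; apply: JM.
have JK x : J x -> K x by exists 0; rewrite mul0r subr0.
case: (Jmax K HK JK) => [KJ|/(_ 1) //]; case: Ja; apply/KJ.
by exists 1; rewrite mul1r subrr.
Qed.

End IdealFacts.

Section CoefficientIdeals.
Variable R : comNzRingType.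
Implicit Types J K : R -> Prop.

Definition coefs_in J (u : {poly R}) : Prop := forall i, J u`_i.

Lemma coefs_in_mul J K u v :
  is_ideal (ideal_mul J K) -> coefs_in J u -> coefs_in K v ->
  coefs_in (ideal_mul J K) (u * v).
Proof.
move=> HJK Ju Kv k; rewrite coefM; apply: ideal_sum => // i _.
exact: ideal_mul_prod.
Qed.

(* Division by a monic polynomial does not leave the coefficient ideal:
   the remainder is linear and u = Σ u_i X^i with every u_i ∈ J. *)
Lemma coefs_in_rmodp J d u :
  is_ideal J -> d \is monic -> coefs_in J u -> coefs_in J (rmodp u d).
Proof.
move=> HJ md Ju k; rewrite -[u]coefK poly_def rmodp_sum // coef_sum.
apply: ideal_sum => // i _; rewrite rmodpZ // coefZ.
by case: HJ => _ _ JM; rewrite mulrC; apply: JM.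
Qed.

Lemma coefs_in_rmodp_pow J (I : {poly R} -> Prop) p :
  is_ideal J -> p \is monic -> (forall g, I g -> coefs_in J (rmodp g p)) ->
  forall t g, ideal_pow I t g -> coefs_in (ideal_pow J t) (rmodp g p).
Proof.
move=> HJ mp Hp; elim=> [//|t IH] g /= [s [Hs ->]].
have HJt := ideal_pow_ideal t.+1 HJ.
move=> k; rewrite rmodp_sum // coef_sum big_seq.
apply: ideal_sum => // q /Hs [Iq1 Iq2].
rewrite -rmodp_mulmr // -rmodp_mulml //; apply: coefs_in_rmodp => //.
exact: coefs_in_mul (Hp _ Iq1) (IH _ Iq2).
Qed.

Definition top_outside J (f : {poly R}) (d : nat) : Prop :=
  ~ J f`_d /\ forall j, (d < j)%N -> J f`_j.

Lemma exists_top_outside J (f : {poly R}) i :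
  J 0 -> ~ J f`_i -> exists d, top_outside J f d.
Proof.
move=> J0 Ji.
have [d [Jd Jtop]] : exists d, ~ J f`_d /\ forall k, (d < k)%N -> ~ ~ J f`_k.
  by apply: (last_witness (N := size f) Ji) => k Hk; rewrite nth_default.
by exists d; split => // k /Jtop /NNPP.
Qed.

Definition reducer (f : {poly R}) (b : R) (d : nat) : {poly R} :=
  'X^d + \poly_(i < d) (b * f`_i).

Lemma reducer_size f b d : size (reducer f b d) = d.+1.
Proof. by rewrite size_polyDl size_polyXn // ltnS size_poly. Qed.

Lemma reducer_monic f b d : reducer f b d \is monic.
Proof.
by rewrite monicE lead_coefDl ?lead_coefXn // size_polyXn ltnS size_poly.
Qed.

Lemma reducer_congr J f b d :
  is_ideal J -> top_outside J f d -> J (1 - b * f`_d) ->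
  coefs_in J (b%:P * f - reducer f b d).
Proof.
move=> HJ [_ Jtop] Jb j; rewrite coefB coefCM coefD coefXn coef_poly.
case: (ltngtP j d) => [_|Hj|->] /=; rewrite ?(mulr0n, mulr1n, add0r, addr0).
- by rewrite subrr; case: HJ.
- by rewrite subr0; case: HJ => _ _ JM; apply/JM/Jtop.
- by rewrite -opprB; apply: ideal_opp.
Qed.

End CoefficientIdeals.

Section MaximalContraction.
Variables (R : idomainType) (I : {poly R} -> Prop).
Hypothesis HI : is_ideal I.
Let m := contraction I.

Lemma contraction_ideal : is_ideal m.
Proof.
case: HI => I0 ID IM; split; rewrite /m /contraction ?polyC0 //.
- by move=> x y Ix Iy; rewrite polyCD; apply: ID.
- by move=> a x Ix; rewrite polyCM; apply: IM.
Qed.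

Lemma coefs_in_contraction u : coefs_in m u -> I u.
Proof.
move=> mu; rewrite -[u]coefK poly_def; apply: ideal_sum => // i _.
by rewrite -mul_polyC mulrC; case: HI => _ _ IM; apply: IM; apply: mu.
Qed.

(* An element of I cannot have a constant term as its only coefficient
   outside m: subtracting the other terms would put it in m. *)
Lemma top_outside_pos f d : I f -> top_outside m f d -> (0 < d)%N.
Proof.
move=> If [mfd mtop]; rewrite lt0n; apply/negP => /eqP d0; apply: mfd; rewrite d0.
have Itail : I (f - (f`_0)%:P).
  apply: coefs_in_contraction => -[|j]; rewrite coefB coefC /=.
    by rewrite subrr; case: contraction_ideal.
  by rewrite subr0; apply: mtop; rewrite d0.
by rewrite /m /contraction -[_%:P](subKr f); apply: ideal_sub.
Qed.

Lemma reducer_reduces f d b :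
  I f -> top_outside m f d -> m (1 - b * f`_d) ->
  (forall g d', I g -> top_outside m g d' -> (d <= d')%N) ->
  forall g, I g -> coefs_in m (rmodp g (reducer f b d)).
Proof.
move=> If ftop mb dmin g Ig; set p := reducer f b d.
have mp : p \is monic := reducer_monic f b d.
have Ip : I p.
  rewrite -[p](subKr (b%:P * f)); case: (HI) => _ _ IM.
  apply: ideal_sub => //; first exact: IM.
  exact: coefs_in_contraction (reducer_congr contraction_ideal ftop mb).
have Ir : I (rmodp g p).
  have -> : rmodp g p = g - rdivp g p * p.
    by apply/eqP; rewrite eq_sym subr_eq addrC -(rdivp_eq mp).
  case: (HI) => _ _ IM.
  by apply: ideal_sub => //; apply: IM.
have m0 : m 0 by case: contraction_ideal.
move=> j; apply: NNPP => mrj.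
have [d' rtop] := exists_top_outside m0 mrj.
have : (d' < d)%N.
  have szr : (size (rmodp g p) <= d)%N.
    by rewrite -ltnS -(reducer_size f b d) ltn_rmodpN0 ?monic_neq0.
  apply: leq_trans szr; rewrite ltnNge; apply/negP => Hle; case: rtop => + _.
  by rewrite nth_default.
by rewrite ltnNge (dmin _ _ Ir rtop).
Qed.

Lemma exists_reducing_monic :
  is_maximal_ideal m ->
  exists p : {poly R}, [/\ p \is monic, (1 < size p)%N &
    forall g, I g -> coefs_in m (rmodp g p)].
Proof.
move=> Hmax; have m0 : m 0 by case: contraction_ideal.
case: (classic (forall f, I f -> coefs_in m f)) => [Iall|].
  exists 'X; split; rewrite ?monicX ?size_polyX //.
  by move=> g /Iall; apply: coefs_in_rmodp contraction_ideal (monicX _).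
move=> /not_all_ex_not [f0 /(imply_to_and (I f0)) [If0 /not_all_ex_not [i0 mi0]]].
have [d0 top0] := exists_top_outside m0 mi0.
pose P d := exists f, I f /\ top_outside m f d.
have [d [[f [If ftop]] dmin]] := @least_witness P d0 (ex_intro _ f0 (conj If0 top0)).
have [b mb] := maximal_ideal_inverse Hmax (proj1 ftop).
exists (reducer f b d); split; rewrite ?reducer_monic ?reducer_size ?ltnS //.
- exact: top_outside_pos If ftop.
- apply: reducer_reduces mb _ => // g d' Ig gtop; rewrite leqNgt.
  by apply/negP => /dmin; apply; exists g.
Qed.

End MaximalContraction.

Lemma pow_contraction_sub (R : idomainType) (I : {poly R} -> Prop) t r :
  ideal_pow (contraction I) t r -> contraction (ideal_pow I t) r.
Proof.
elim: t r => [//|t IH] r /= [s [Hs ->]].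
exists [seq (q.1%:P, q.2%:P) | q <- s]; split.
- by move=> q /mapP [q' /Hs [I1 I2] ->]; split => //; apply: IH.
- by rewrite big_map rmorph_sum; apply: eq_bigr => q _; apply: rmorphM.
Qed.

Theorem corollary3p6 (R : idomainType) (I : {poly R} -> Prop) :
  is_ideal I -> is_maximal_ideal (contraction I) -> power_stable I.
Proof.
move=> HI Hmax t _ r; split; last exact: pow_contraction_sub.
move=> Irt; have [p [mp szp Hp]] := exists_reducing_monic HI Hmax.
have := coefs_in_rmodp_pow (contraction_ideal HI) mp Hp Irt 0.
have szr : (size r%:P < size p)%N by apply: leq_ltn_trans (size_polyC_leq1 r) szp.
by rewrite rmodp_small // coefC.
Qed.
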